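(* Consider the two-route traffic model with affine routing ratios described in the context, and let $\overline{x}$ be its unique equilibrium. Define, for $i=1,2$, the effective capacities $\tilde F_i=\frac{q_i+\sqrt{q_i^2+k_i}}{2\alpha}$, where $q_1=\alpha\big(F_1(1+\tfrac{E_2}{E_1})-E_2\big)-2(1-\alpha)r_1^0E_2$, $q_2=\alpha\big(F_2(1+\tfrac{E_1}{E_2})-E_1\big)-2(1-\alpha)r_2^0E_1$, $k_1=8\alpha F_1E_2$, $k_2=8\alpha F_2E_1$. Then: (i) if $\phi\le\min\{\tilde F_1,\tilde F_2\}$, the network has no unsatisfied demand at $\overline{x}$, i.e., $\phi R_\ell(\overline{x})\le S_\ell(\overline{x}_\ell)$ for $\ell=1,2$; (ii) if $\phi>\min\{\tilde F_1,\tilde F_2\}=\tilde F_i$, then there is unsatisfied demand on route $i$ at $\overline{x}$, i.e., $\phi R_i(\overline{x})>S_i(\overline{x}_i)$.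
   Context: Two routes $i=1,2$ connect an origin to a destination, with positive parameters $B_i$ (jam density), $C_i$ (critical density), $F_i$ (capacity), $C_i<B_i$, and constant demand $\phi>0$. Set $v_i=F_i/C_i$ and $E_i=v_iB_i$. The state $x=(x_1,x_2)\in\Omega:=[0,B_1]\times[0,B_2]$ evolves by $\dot x_i=\min\{\phi R_i(x),S_i(x_i)\}-D_i(x_i)$, with $S_i(x_i)=F_i$ if $x_i<C_i$, $S_i(x_i)=\frac{F_i}{B_i-C_i}(B_i-x_i)$ otherwise; $D_i(x_i)=v_ix_i$ if $x_i<C_i$, $D_i(x_i)=F_i$ otherwise. The routing ratios are affine: with $\alpha\in(0,1]$ and constants $r_1^0,r_2^0\ge0$, $r_1^0+r_2^0=1$, $R_1(x)=(1-\alpha)r_1^0+\alpha\big(\tfrac12+\tfrac12(\tfrac{x_2}{B_2}-\tfrac{x_1}{B_1})\big)$, $R_2(x)=(1-\alpha)r_2^0+\alpha\big(\tfrac12+\tfrac12(\tfrac{x_1}{B_1}-\tfrac{x_2}{B_2})\big)$. Standing assumptions: $\phi<F_1+F_2$; $F_i>(1-\alpha)\phi r_i^0$ for $i=1,2$; $\phi<E_i$ for $i=1,2$. Under these assumptions the system has a unique equilibrium $\overline{x}\in\Omega$. Demand on route $i$ at state $x$ is called unsatisfied if $\phi R_i(x)>S_i(x_i)$. *)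

From Stdlib Require Import Reals Lra.
Open Scope R_scope.

(* Supply function of a route with jam density B, critical density C, capacity F. *)
Definition supply (B C F x : R) : R :=
  if Rlt_dec x C then F else F / (B - C) * (B - x).

(* Demand (outflow) function of a route; v = F / C. *)
Definition demand (C F x : R) : R :=
  if Rlt_dec x C then (F / C) * x else F.

Definition route_ratio1 (alpha r10 B1 B2 x1 x2 : R) : R :=
  (1 - alpha) * r10 + alpha * (1/2 + 1/2 * (x2 / B2 - x1 / B1)).
Definition route_ratio2 (alpha r20 B1 B2 x1 x2 : R) : R :=
  (1 - alpha) * r20 + alpha * (1/2 + 1/2 * (x1 / B1 - x2 / B2)).

(* Vector field of the dynamics  xdot_i = min{phi R_i(x), S_i(x_i)} - D_i(x_i). *)
Definition field1 (B1 B2 C1 F1 phi alpha r10 x1 x2 : R) : R :=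
  Rmin (phi * route_ratio1 alpha r10 B1 B2 x1 x2) (supply B1 C1 F1 x1) - demand C1 F1 x1.
Definition field2 (B1 B2 C2 F2 phi alpha r20 x1 x2 : R) : R :=
  Rmin (phi * route_ratio2 alpha r20 B1 B2 x1 x2) (supply B2 C2 F2 x2) - demand C2 F2 x2.

Definition is_equilibrium (B1 B2 C1 C2 F1 F2 phi alpha r10 r20 x1 x2 : R) : Prop :=
  0 <= x1 <= B1 /\ 0 <= x2 <= B2 /\
  field1 B1 B2 C1 F1 phi alpha r10 x1 x2 = 0 /\
  field2 B1 B2 C2 F2 phi alpha r20 x1 x2 = 0.

Definition Ftilde (alpha q k : R) : R := (q + sqrt (q ^ 2 + k)) / (2 * alpha).

(* For route 1: own (F,r0,E) = (F1,r10,E1), other E = E2; symmetric for route 2. *)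
Definition q_eff (alpha F r0 Eown Eoth : R) : R :=
  alpha * (F * (1 + Eoth / Eown) - Eoth) - 2 * (1 - alpha) * r0 * Eoth.
Definition k_eff (alpha F Eoth : R) : R := 8 * alpha * F * Eoth.

From Stdlib Require Import Reals Lra.
Open Scope R_scope.

(* At an equilibrium each density is at most its critical value (beyond it the supply
   falls below the outflow [F_i]), so each supply equals [F_i] and each outflow is
   [w_i = min (phi R_i, F_i)]; since [x_i / B_i = w_i / E_i], the routing ratios are
   affine in the outflows.  [Ftilde] is the positive root of
   [P(phi) = 4 alpha (alpha phi^2 - q phi) - k], and substituting the routing ratio gives
   [E_i P_i = 4 alpha (2 E_1 E_2 (phi R_i - F_i) + alpha E_i phi (phi - F_i - w_j)
                       + alpha E_j phi (w_i - F_i))].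
   Because [phi < F_1 + F_2] rules out unsatisfied demand on both routes at once, each
   term has the sign of [phi R_i - F_i].  Hence the demand on route [i] is satisfied
   exactly when [phi <= Ftilde_i]. *)

Lemma le_Ftilde_iff (alpha q k phi : R) :
  0 < alpha -> 0 < k -> 0 < phi ->
  phi <= Ftilde alpha q k <-> 4 * alpha * (alpha * phi ^ 2 - q * phi) - k <= 0.
Proof.
  intros halpha hk hphi; unfold Ftilde.
  assert (hs : sqrt (q ^ 2 + k) ^ 2 = q ^ 2 + k) by (apply pow2_sqrt; nra).
  pose proof (sqrt_pos (q ^ 2 + k)) as hs0.
  set (s := sqrt (q ^ 2 + k)) in *.
  assert (hqs : q < s) by nra.
  assert (factor : 4 * alpha * (alpha * phi ^ 2 - q * phi) - k
                   = (2 * alpha * phi - q - s) * (2 * alpha * phi - q + s)) by nra.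
  assert (hroot : (q + s) / (2 * alpha) * (2 * alpha) = q + s) by (field; lra).
  rewrite factor.
  split; intros h.
  - assert (2 * alpha * phi <= q + s) by nra.
    assert (0 <= (q + s - 2 * alpha * phi) * (2 * alpha * phi - q + s))
      by (apply Rmult_le_pos; nra).
    lra.
  - assert (2 * alpha * phi - q - s <= 0) by nra.
    nra.
Qed.

Lemma equilibrium_route (B C F phi rho x : R) :
  0 < C -> C < B -> 0 < F -> x <= B ->
  Rmin (phi * rho) (supply B C F x) - demand C F x = 0 ->
  supply B C F x = F /\ F / C * x = Rmin (phi * rho) F.
Proof.
  intros hC hCB hF hx heq; unfold supply, demand in *.
  destruct (Rlt_dec x C) as [hfree | hcong]; [lra |].
  assert (hslope : 0 < F / (B - C)) by (apply Rdiv_lt_0_compat; lra).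
  pose proof (Rmin_r (phi * rho) (F / (B - C) * (B - x))) as hmin.
  apply Rnot_lt_le in hcong.
  assert (hjam : F / (B - C) * (B - C) = F) by (field; lra).
  assert (hxC : x = C) by nra.
  subst x.
  rewrite hjam in heq |- *.
  replace (F / C * C) with F by (field; lra).
  lra.
Qed.

Section SatisfiedDemand.

Variables (alpha r phi F Fo E Eo w wo rho rho_o : R).
Hypotheses (halpha : 0 < alpha) (hphi : 0 < phi) (hF : 0 < F) (hFo : 0 < Fo)
  (hE : 0 < E) (hEo : 0 < Eo) (hcap : phi < F + Fo).
Hypotheses (hrho : rho = (1 - alpha) * r + alpha * (1 / 2 + 1 / 2 * (wo / Eo - w / E)))
  (hsum : rho + rho_o = 1)
  (hw : w = Rmin (phi * rho) F) (hwo : wo = Rmin (phi * rho_o) Fo).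

Let P := 4 * alpha * (alpha * phi ^ 2 - q_eff alpha F r E Eo * phi) - k_eff alpha F Eo.

Lemma Ftilde_quadratic_in_outflows :
  E * P = 4 * alpha * (2 * E * Eo * (phi * rho - F)
            + alpha * E * phi * (phi - F - wo) + alpha * Eo * phi * (w - F)).
Proof. unfold P, q_eff, k_eff; rewrite hrho; field; lra. Qed.

Lemma Ftilde_quadratic_nonpos_iff : P <= 0 <-> phi * rho <= F.
Proof.
  pose proof Ftilde_quadratic_in_outflows as hP.
  assert (hw_le : w <= F) by (rewrite hw; apply Rmin_r).
  assert (hwo_le : wo <= phi * rho_o) by (rewrite hwo; apply Rmin_l).
  assert (hEEo : 0 < 2 * E * Eo) by nra.
  assert (hEphi : 0 < alpha * E * phi) by (repeat apply Rmult_lt_0_compat; lra).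
  assert (hEophi : 0 < alpha * Eo * phi) by (repeat apply Rmult_lt_0_compat; lra).
  destruct (Rle_dec (phi * rho) F) as [hsat | hunsat]; split; intros h; try lra.
  - assert (hw_eq : w = phi * rho) by (rewrite hw; apply Rmin_left; lra).
    assert (hwo_ge : phi - F - wo <= 0).
    { rewrite hwo; apply Rmin_case; nra. }
    assert (E * P <= 0).
    { rewrite hP, hw_eq.
      assert (0 <= 2 * E * Eo * (F - phi * rho)) by (apply Rmult_le_pos; lra).
      assert (0 <= alpha * E * phi * (F + wo - phi)) by (apply Rmult_le_pos; lra).
      assert (0 <= alpha * Eo * phi * (F - phi * rho)) by (apply Rmult_le_pos; lra).
      rewrite <- (Rmult_0_r (4 * alpha)); apply Rmult_le_compat_l; lra. }
    nra.
  - (* Congestion here leaves [phi * rho_o < phi - F < Fo] on the other route. *)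
    assert (hw_eq : w = F) by (rewrite hw; apply Rmin_right; lra).
    assert (hwo_eq : wo = phi * rho_o) by (rewrite hwo; apply Rmin_left; nra).
    assert (0 < E * P).
    { rewrite hP.
      replace (phi - F - wo) with (phi * rho - F)
        by (rewrite hwo_eq; replace rho_o with (1 - rho) by lra; ring).
      replace (w - F) with 0 by lra.
      assert (0 < 2 * E * Eo * (phi * rho - F)) by (apply Rmult_lt_0_compat; lra).
      assert (0 < alpha * E * phi * (phi * rho - F)) by (apply Rmult_lt_0_compat; lra).
      apply Rmult_lt_0_compat; lra. }
    nra.
Qed.

Lemma le_Ftilde_iff_satisfied :
  phi <= Ftilde alpha (q_eff alpha F r E Eo) (k_eff alpha F Eo) <-> phi * rho <= F.
Proof.
  rewrite le_Ftilde_iff by (unfold k_eff; repeat apply Rmult_lt_0_compat; lra).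
  exact Ftilde_quadratic_nonpos_iff.
Qed.

End SatisfiedDemand.

Lemma route_ratio1_scaled (alpha r10 B1 B2 v1 v2 x1 x2 : R) :
  B1 <> 0 -> B2 <> 0 -> v1 <> 0 -> v2 <> 0 ->
  route_ratio1 alpha r10 B1 B2 x1 x2 =
  (1 - alpha) * r10 + alpha * (1 / 2 + 1 / 2 * (v2 * x2 / (v2 * B2) - v1 * x1 / (v1 * B1))).
Proof. intros; unfold route_ratio1; field; auto. Qed.

Lemma route_ratio2_scaled (alpha r20 B1 B2 v1 v2 x1 x2 : R) :
  B1 <> 0 -> B2 <> 0 -> v1 <> 0 -> v2 <> 0 ->
  route_ratio2 alpha r20 B1 B2 x1 x2 =
  (1 - alpha) * r20 + alpha * (1 / 2 + 1 / 2 * (v1 * x1 / (v1 * B1) - v2 * x2 / (v2 * B2))).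
Proof. intros; unfold route_ratio2; field; auto. Qed.

Lemma route_ratio_sum (alpha r10 r20 B1 B2 x1 x2 : R) :
  r10 + r20 = 1 ->
  route_ratio1 alpha r10 B1 B2 x1 x2 + route_ratio2 alpha r20 B1 B2 x1 x2 = 1.
Proof.
  intros hr; unfold route_ratio1, route_ratio2.
  replace r20 with (1 - r10) by lra.
  replace (x1 / B1 - x2 / B2) with (- (x2 / B2 - x1 / B1)) by ring.
  set (d := x2 / B2 - x1 / B1).
  field.
Qed.

Theorem proposition2
  (B1 B2 C1 C2 F1 F2 phi alpha r10 r20 x1 x2 : R)
  (hB1 : 0 < B1) (hB2 : 0 < B2) (hC1 : 0 < C1) (hC2 : 0 < C2)
  (hF1 : 0 < F1) (hF2 : 0 < F2) (hphi : 0 < phi)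
  (hCB1 : C1 < B1) (hCB2 : C2 < B2)
  (halpha : 0 < alpha <= 1)
  (hr10 : 0 <= r10) (hr20 : 0 <= r20) (hr : r10 + r20 = 1)
  (hcap : phi < F1 + F2)
  (hF1r : F1 > (1 - alpha) * phi * r10) (hF2r : F2 > (1 - alpha) * phi * r20)
  (hE1 : phi < (F1 / C1) * B1) (hE2 : phi < (F2 / C2) * B2)
  (heq : is_equilibrium B1 B2 C1 C2 F1 F2 phi alpha r10 r20 x1 x2) :
  let E1 := (F1 / C1) * B1 in
  let E2 := (F2 / C2) * B2 in
  let Ft1 := Ftilde alpha (q_eff alpha F1 r10 E1 E2) (k_eff alpha F1 E2) in
  let Ft2 := Ftilde alpha (q_eff alpha F2 r20 E2 E1) (k_eff alpha F2 E1) in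
  (phi <= Rmin Ft1 Ft2 ->
     phi * route_ratio1 alpha r10 B1 B2 x1 x2 <= supply B1 C1 F1 x1 /\
     phi * route_ratio2 alpha r20 B1 B2 x1 x2 <= supply B2 C2 F2 x2) /\
  (phi > Rmin Ft1 Ft2 -> Rmin Ft1 Ft2 = Ft1 ->
     phi * route_ratio1 alpha r10 B1 B2 x1 x2 > supply B1 C1 F1 x1) /\
  (phi > Rmin Ft1 Ft2 -> Rmin Ft1 Ft2 = Ft2 ->
     phi * route_ratio2 alpha r20 B1 B2 x1 x2 > supply B2 C2 F2 x2).
Proof.
  intros E1 E2 Ft1 Ft2.
  destruct heq as (hx1 & hx2 & hfield1 & hfield2).
  destruct (equilibrium_route _ _ _ _ _ _ hC1 hCB1 hF1 (proj2 hx1) hfield1)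
    as [hS1 hw1].
  destruct (equilibrium_route _ _ _ _ _ _ hC2 hCB2 hF2 (proj2 hx2) hfield2)
    as [hS2 hw2].
  assert (hv1 : 0 < F1 / C1) by (apply Rdiv_lt_0_compat; lra).
  assert (hv2 : 0 < F2 / C2) by (apply Rdiv_lt_0_compat; lra).
  assert (hE1pos : 0 < E1) by (apply Rmult_lt_0_compat; lra).
  assert (hE2pos : 0 < E2) by (apply Rmult_lt_0_compat; lra).
  pose proof (route_ratio_sum alpha r10 r20 B1 B2 x1 x2 hr) as hsum.
  assert (sat1 : phi <= Ft1 <-> phi * route_ratio1 alpha r10 B1 B2 x1 x2 <= F1).
  { apply le_Ftilde_iff_satisfied with (Fo := F2) (w := F1 / C1 * x1)
      (wo := F2 / C2 * x2) (rho_o := route_ratio2 alpha r20 B1 B2 x1 x2);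
      try lra.
    apply route_ratio1_scaled; lra. }
  assert (sat2 : phi <= Ft2 <-> phi * route_ratio2 alpha r20 B1 B2 x1 x2 <= F2).
  { apply le_Ftilde_iff_satisfied with (Fo := F1) (w := F2 / C2 * x2)
      (wo := F1 / C1 * x1) (rho_o := route_ratio1 alpha r10 B1 B2 x1 x2);
      try lra.
    apply route_ratio2_scaled; lra. }
  rewrite hS1, hS2.
  pose proof (Rmin_l Ft1 Ft2); pose proof (Rmin_r Ft1 Ft2).
  split; [| split]; intros; [split |..].
  - apply sat1; lra.
  - apply sat2; lra.
  - apply Rnot_le_gt; rewrite <- sat1; lra.
  - apply Rnot_le_gt; rewrite <- sat2; lra.
Qed.
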